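(* Let $Y=g(X+\delta)+\epsilon$, where $X,\delta,\epsilon$ are independent random variables, $X$ has a density with respect to Lebesgue measure, $\delta$ has a density with respect to a $\sigma$-finite Borel measure $\mu$, and $\epsilon$ has a density with respect to Lebesgue measure. Let $p\in(0,1)$ and $y_0$ with $\mathbb{P}(Y\le y_0)=p$. If $g$ is non-decreasing, then an optimal predictor of $\mathbb{I}(Y>y_0)$ can be written in the form $\mathbb{I}(X>x_0)$ for some constant $x_0$ that calibrates the predictor.
   Context: A predictor of $\mathbb{I}(Y>y_0)$ is an indicator $\mathbb{I}(h(X)>\tau)$ with $h$ Borel; it is calibrated at level $q$ if $\mathbb{P}(h(X)>\tau)=1-q$, and optimal (at level $q$) if its precision $\mathbb{P}(Y>y_0\mid h(X)>\tau)$ is at least that of every other predictor calibrated at level $q$. *)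

From HB Require Import structures.
From mathcomp Require Import all_boot all_order all_algebra.
From mathcomp Require Import all_classical all_reals all_analysis.
Set Implicit Arguments. Unset Strict Implicit. Unset Printing Implicit Defensive.
Import Order.TTheory GRing.Theory Num.Theory.
Local Open Scope classical_set_scope.
Local Open Scope ring_scope.

Section Defs.
Context {d : measure_display} {Omega : measurableType d} {R : realType}.
Variable P : probability Omega R.

Definition indep3 (X Z W : Omega -> R) : Prop :=
  forall A B C : set R, measurable A -> measurable B -> measurable C ->
    P (X @^-1` A `&` Z @^-1` B `&` W @^-1` C) =
    (P (X @^-1` A) * P (Z @^-1` B) * P (W @^-1` C))%E.

Definition has_density_wrt (mu : {measure set (measurableTypeR R) -> \bar R})
  (X : Omega -> R) : Prop :=
  exists f : R -> R, measurable_fun setT f /\ (forall x, 0 <= f x) /\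
    forall A : set R, measurable A ->
      P (X @^-1` A) = (\int[mu]_(x in A) (f x)%:E)%E.

(* the predictor I(h(X) > tau) is calibrated at level q *)
Definition calibrated (X : Omega -> R) (q : R) (h : R -> R) (tau : R) : Prop :=
  P [set w | tau < h (X w)] = (1 - q)%:E.

Definition precision (X Y : Omega -> R) (y0 : R) (h : R -> R) (tau : R) : R :=
  fine (P [set w | y0 < Y w /\ tau < h (X w)]) / fine (P [set w | tau < h (X w)]).

Definition optimal (X Y : Omega -> R) (y0 q : R) (h : R -> R) (tau : R) : Prop :=
  calibrated X q h tau /\
  forall (h' : R -> R) (tau' : R), measurable_fun setT h' ->
    calibrated X q h' tau' -> precision X Y y0 h' tau' <= precision X Y y0 h tau.

End Defs.

(* Calibrate with a quantile x0 of X, which exists because X has no atoms.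
   Against a competitor A = {h(X) > tau} of the same mass as B = {X > x0}, only
   the parts A \ B and B \ A matter, and they too have equal mass.  Compare
   {Y > y0} with F = {g(x0 + delta) + eps > y0}: as g is nondecreasing, F
   contains {Y > y0} where X <= x0 and is contained in it where X > x0, and F is
   independent of X.  Hence
   P(Y > y0, A \ B) <= P(A \ B) P(F) = P(B \ A) P(F) <= P(Y > y0, B \ A). *)

From HB Require Import structures.
From mathcomp Require Import all_boot all_order all_algebra.
From mathcomp Require Import all_classical all_reals all_analysis.
From mathcomp Require Import measurable_realfun.
Set Implicit Arguments. Unset Strict Implicit. Unset Printing Implicit Defensive.
Import Order.TTheory GRing.Theory Num.Theory.
Local Open Scope classical_set_scope.
Local Open Scope ring_scope.

Lemma measurable_preimage d d' (T : measurableType d) (U : sigmaRingType d')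
    (f : T -> U) (A : set U) :
  measurable_fun setT f -> measurable A -> measurable (f @^-1` A).
Proof. by move=> mf mA; rewrite -[_ @^-1` _]setTI; exact: mf. Qed.

Lemma measurable_lt_set d (T : measurableType d) (R : realType) (f : T -> R)
    (a : R) :
  measurable_fun setT f -> measurable [set w | a < f w].
Proof. by move=> mf; rewrite -preimage_itvoy; exact: measurable_preimage. Qed.

Lemma itvNyoEbigcup (R : realType) (x : R) :
  `]-oo, x[%classic = \bigcup_k `]-oo, x - k.+1%:R^-1]%classic.
Proof.
rewrite predeqE => y; split => [|[n _]]/=; rewrite !in_itv/=.
  by move=> /ltr_add_invr[k ykx]; exists k => //=; rewrite in_itv/= lerBrDr ltW.
by move=> /le_lt_trans; apply; rewrite ltrBlDr ltrDl invr_gt0.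
Qed.

Section cdf_quantile.
Context d (T : measurableType d) (R : realType) (P : probability T R).
Variable X : {RV P >-> R}.
Local Open Scope ereal_scope.

Lemma cvg_cdf_left (a : R) :
  cdf X (a - n.+1%:R^-1)%R @[n --> \oo] --> P (X @^-1` `]-oo, a[).
Proof.
rewrite itvNyoEbigcup preimage_bigcup /cdf /distribution /pushforward.
apply: nondecreasing_cvg_mu => [n||m n mn]; first exact: measurable_funPTI.
  by apply: bigcup_measurable => n _; exact: measurable_funPTI.
apply/subsetPset; apply: preimage_subset; apply: subset_itvl.
by rewrite bnd_simp lerD2l lerN2 lef_pV2 ?posrE// ler_nat.
Qed.

Hypothesis X_atomless : forall x, P (X @^-1` [set x]) = 0.

Lemma cdf_atomlessE (a : R) : cdf X a = P (X @^-1` `]-oo, a[).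
Proof.
rewrite /cdf /distribution /pushforward -(setUitv1 true) // preimage_setU measureU //.
- by rewrite -[RHS]adde0; congr (_ + _); exact: X_atomless.
- exact: measurable_funPTI.
- by apply/seteqP; split => // w /= [+ Xw]; rewrite -Xw in_itv/= ltxx.
Qed.

Lemma cdf_quantile (p : R) : (0 < p < 1)%R -> exists x, cdf X x = p%:E.
Proof.
move=> /andP[p_gt0 p_lt1].
have [a cdf_a_lt] : exists a, cdf X a < p%:E.
  apply: contrapT => /forallNP cdf_ge.
  have : p%:E <= 0.
    apply: (cvge_to_ge (cvg_cdfNy0 X)); apply: nearW => x.
    by rewrite leNgt; exact/negP/cdf_ge.
  by rewrite lee_fin leNgt p_gt0.
have [b cdf_b_gt] : exists b, p%:E < cdf X b.
  apply: contrapT => /forallNP cdf_le.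
  have : 1 <= p%:E.
    apply: (cvge_to_le (cvg_cdfy1 X)); apply: nearW => x.
    by rewrite leNgt; exact/negP/cdf_le.
  by rewrite lee_fin leNgt p_lt1.
pose S := [set x | cdf X x <= p%:E].
have S_sup : has_sup S.
  split; first by exists a; exact: ltW.
  exists b => x Sx; rewrite leNgt; apply/negP => bx.
  by have := le_trans (cdf_nondecreasing X (ltW bx)) Sx; rewrite leNgt cdf_b_gt.
exists (sup S); apply/le_anti/andP; split.
- rewrite cdf_atomlessE; apply: (cvge_to_le (cvg_cdf_left (a := sup S))).
  apply: nearW => n.
  have [e Se lt_e] : exists2 e, S e & (sup S - n.+1%:R^-1 < e)%R.
    by apply: sup_adherent => //; rewrite invr_gt0.
  exact: le_trans (cdf_nondecreasing X (ltW lt_e)) Se.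
- apply: (cvge_to_ge (@cdf_right_continuous _ _ _ _ X (sup S))); near=> x.
  rewrite leNgt; apply/negP => /ltW/(sup_upper_bound S_sup).
  by rewrite leNgt => /negP; apply; near: x; exact: nbhs_right_gt.
Unshelve. all: by end_near. Qed.

End cdf_quantile.

Lemma has_density_atomless d (T : measurableType d) (R : realType)
    (P : probability T R) (mu : {measure set (measurableTypeR R) -> \bar R})
    (X : T -> R) :
  has_density_wrt P mu X -> (forall x, mu [set x] = 0%E) ->
  forall x, P (X @^-1` [set x]) = 0%E.
Proof.
move=> [f [mf [_ PXE]]] mu1 x; rewrite PXE ?measurable_set1//.
apply: null_set_integral => //; exact/measurable_EFinP/measurable_funTS.
Qed.

Section independence.
Context d (T : measurableType d) (R : realType) (P : probability T R).
Variables (X D E : T -> R).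
Hypotheses (mX : measurable_fun setT X) (mD : measurable_fun setT D)
  (mE : measurable_fun setT E).
Let DE w := (D w, E w).
Local Open Scope ereal_scope.

Lemma indep3_pair : indep3 P X D E ->
  forall (C : set R) (S : set (R * R)), measurable C -> measurable S ->
  P (X @^-1` C `&` DE @^-1` S) = P (X @^-1` C) * P (DE @^-1` S).
Proof.
move=> indXDE C S mC mS.
have mDE : measurable_fun setT DE := measurable_fun_pair mD mE.
have mXC : measurable (X @^-1` C) := measurable_preimage mX mC.
(* The measure instance of [pushforward] takes the measurability proof as an
   argument, so it cannot be inferred and is named explicitly. *)
pose m1 := measure_function_pushforward__canonical__measure_function_Measure
  (mrestr P mXC) mDE.
pose m2 := mscale (NngNum (fine_ge0 (measure_ge0 P (X @^-1` C))))
  (measure_function_pushforward__canonical__measure_function_Measure P mDE).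
pose rect := [set A `*` B | A in @measurable _ R & B in @measurable _ R].
have rectI : setI_closed rect.
  move=> _ _ [A1 mA1 [B1 mB1 <-]] [A2 mA2 [B2 mB2 <-]].
  rewrite -setXI; exists (A1 `&` A2); first exact: measurableI.
  by exists (B1 `&` B2) => //; exact: measurableI.
have PXC_fin : P (X @^-1` C) \is a fin_num by rewrite fin_num_measure.
have m1m2 : m1 S = m2 S.
  apply: (measure_unique rect (fun=> setT)) => //.
  - exact: measurable_prod_measurableType.
  - by move=> _; exists setT => //; exists setT => //; rewrite setXTT.
  - by rewrite bigcup_const.
  - move=> _ [A mA [B mB <-]].
    have := indXDE setT A B measurableT mA mB.
    rewrite preimage_setT setTI probability_setT mul1e => indDE.
    have := indXDE C A B mC mA mB; rewrite -muleA -indDE => indXDE_AB.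
    by rewrite /= /mscale /pushforward /mrestr /= fineK // setIC setIA.
  - by move=> _; rewrite /= /pushforward /mrestr (le_lt_trans (probability_le1 _ _))
      ?ltey //; apply: measurableI => //; exact: measurable_preimage.
by rewrite setIC -[P (X @^-1` C)]fineK //; exact: m1m2.
Qed.

End independence.

Section swap.
Context d (T : measurableType d) (R : realType) (P : probability T R).
Local Open Scope ereal_scope.

Lemma measureD_eq (A B : set T) : measurable A -> measurable B ->
  P A = P B -> P (A `\` B) = P (B `\` A).
Proof.
move=> mA mB AB.
(* [measureD] states [P A] through another structure projection than [AB], so
   [rewrite AB] finds no match; [congr] compares up to conversion instead. *)
rewrite !measureD ?(setIC B) ?ltey_eq ?fin_num_measure //.
congr (_ - _); exact: AB.
Qed.

Lemma le_measure_swap (X : T -> R) (Y F : set T) (CA CB : set R) :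
  measurable_fun setT X -> measurable Y -> measurable F ->
  measurable CA -> measurable CB ->
  P (X @^-1` CA) = P (X @^-1` CB) ->
  Y `&` ~` (X @^-1` CB) `<=` F -> F `&` X @^-1` CB `<=` Y ->
  (forall C, measurable C -> P (X @^-1` C `&` F) = P (X @^-1` C) * P F) ->
  P (Y `&` X @^-1` CA) <= P (Y `&` X @^-1` CB).
Proof.
move=> mX mY mF mCA mCB AB YBF FBY indF.
have mA := measurable_preimage mX mCA; have mB := measurable_preimage mX mCB.
have mYA := measurableI _ _ mY mA; have mYB := measurableI _ _ mY mB.
set A := X @^-1` CA; set B := X @^-1` CB.
rewrite (measureDI P mYA mB) (measureDI P mYB mA) (setIAC Y B A).
apply: leeD => //; apply: (@le_trans _ _ (P ((A `\` B) `&` F))).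
  apply: le_measure; rewrite ?inE; [exact: measurableD|exact/measurableI/mF/measurableD|].
  by move=> w [[Yw Aw] Bw]; split; [split|apply: YBF].
rewrite (indF _ (measurableD mCA mCB)) (measureD_eq mA mB AB).
rewrite -(indF _ (measurableD mCB mCA)).
apply: le_measure; rewrite ?inE; [exact/measurableI/mF/measurableD|exact: measurableD|].
by move=> w [[Bw Aw] Fw]; split; [split; [apply: FBY|]|].
Qed.

End swap.

Section threshold_predictors.
Context d (T : measurableType d) (R : realType) (P : probability T R).

Lemma exists_calibrated_threshold (X : T -> R) (q : R) :
  measurable_fun setT X -> (forall x, P (X @^-1` [set x]) = 0%E) ->
  0 < q < 1 -> exists x0, calibrated P X q idfun x0.
Proof.
move=> mX X_atomless q01.
pose XR : {RV P >-> R} := HB.pack X (isMeasurableFun.Build _ _ _ _ X mX).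
have [x0 cdf_x0] := cdf_quantile (X := XR) X_atomless q01.
by exists x0; rewrite /calibrated /= -preimage_itvoy EFinB -cdf_x0 -ccdf_1_cdf.
Qed.

Lemma le_precision (X Y : T -> R) (y0 q : R) (h h' : R -> R) (tau tau' : R) :
  q <= 1 -> calibrated P X q h tau -> calibrated P X q h' tau' ->
  measurable [set w | y0 < Y w /\ tau < h (X w)] ->
  measurable [set w | y0 < Y w /\ tau' < h' (X w)] ->
  (P [set w | (y0 < Y w)%R /\ (tau' < h' (X w))%R] <=
   P [set w | (y0 < Y w)%R /\ (tau < h (X w))%R])%E ->
  precision P X Y y0 h' tau' <= precision P X Y y0 h tau.
Proof.
move=> q_le1 cal cal' mYh mYh' le_Yh'_Yh.
rewrite /precision cal cal'; apply: ler_wpM2r; first by rewrite invr_ge0 subr_ge0.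
by apply: fine_le; rewrite ?fin_num_measure.
Qed.

End threshold_predictors.

Theorem proposition4 (d : measure_display) (Omega : measurableType d)
  (R : realType) (P : probability Omega R)
  (X delta eps : Omega -> R) (g : R -> R)
  (mu : {measure set (measurableTypeR R) -> \bar R}) (p y0 : R) :
  measurable_fun setT X -> measurable_fun setT delta -> measurable_fun setT eps ->
  indep3 P X delta eps ->
  has_density_wrt P lebesgue_measure X ->
  sigma_finite setT mu ->
  has_density_wrt P mu delta ->
  has_density_wrt P lebesgue_measure eps ->
  0 < p < 1 ->
  P [set w | g (X w + delta w) + eps w <= y0] = p%:E ->
  {homo g : x y / x <= y} ->
  exists x0 : R,
    optimal P X (fun w => g (X w + delta w) + eps w) y0 p idfun x0.
Proof.
move=> mX mD mE indXDE dX _ _ _ p01 _ g_nd.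
have [x0 calB] := exists_calibrated_threshold mX
  (has_density_atomless dX (@lebesgue_measure_set1 R)) p01.
exists x0; split => // h' tau' mh' cal'.
have mg : measurable_fun setT g by exact: nondecreasing_measurable.
pose SZ := [set z : R * R | y0 < g (x0 + z.1) + z.2].
have mSZ : measurable SZ.
  apply: measurable_lt_set; apply: measurable_funD => //.
  by apply: measurableT_comp => //; exact: measurable_funD.
have mY : measurable [set w | y0 < g (X w + delta w) + eps w].
  apply: measurable_lt_set; apply: measurable_funD => //.
  by apply: measurableT_comp => //; exact: measurable_funD.
have mA : measurable [set w | tau' < h' (X w)].
  by apply: measurable_lt_set; exact: measurableT_comp.
have mB : measurable [set w | x0 < X w] by exact: measurable_lt_set.
apply: (le_precision _ calB cal'); try exact: measurableI.
  by case/andP: p01 => _ /ltW.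
apply: (le_measure_swap (CA := [set x | tau' < h' x]) (CB := [set x | x0 < x])
  mX mY (measurable_preimage (measurable_fun_pair mD mE) mSZ));
  try exact: measurable_lt_set.
- exact: etrans cal' (esym calB).
- move=> w [Yw /negP]; rewrite -leNgt => Xw; apply: lt_le_trans Yw _.
  by rewrite lerD2r g_nd // lerD2r.
- move=> w [SZw Bw]; apply: lt_le_trans SZw _.
  by rewrite lerD2r g_nd // lerD2r ltW.
- by move=> C mC; exact: indep3_pair mX mD mE indXDE _ _ mC mSZ.
Qed.
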